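(* Let $\mathscr{F}:\mathscr{C}_1\to\mathscr{C}_2$ be a functor that inverts coproducts, and suppose $\mathscr{C}_2$ is extensive. If $\mathcal{F}$ is an extensive presheaf on $\mathscr{C}_1$, then its right Kan extension $\mathscr{F}_*\mathcal{F}$ is an extensive presheaf on $\mathscr{C}_2$.
   Context: All categories are locally small. A functor $\mathscr{F}:\mathscr{C}_1\to\mathscr{C}_2$ inverts coproducts if it is fully faithful and, whenever $\mathscr{F}(X)=\coprod_{i\in I}Z_i$ (a coproduct in $\mathscr{C}_2$) for some object $X$ of $\mathscr{C}_1$, there exist objects $X_i$ of $\mathscr{C}_1$ and isomorphisms $\mathscr{F}(X_i)\to Z_i$. A category is extensive if it has an initial object $\emptyset$, existing binary coproducts are disjoint (the square formed by $\emptyset\to X$, $\emptyset\to Y$ and the coproduct injections into $X\sqcup Y$ is a pullback), and coproducts are stable under pullback: for any existing coproduct $\coprod_iU_i$ and any $f:X\to\coprod_iU_i$, the pullbacks $X\times_{\coprod U_i}U_i$ exist and $X$ is their coproduct via the projections to $X$ (existence of all coproducts is not required). A presheaf on $\mathscr{C}$ is a functor $\mathscr{C}^{op}\to\mathrm{Set}$, with $f^*:=\mathcal{F}(f)$; it is extensive if for every coproduct $X=\coprod_iX_i$ existing in $\mathscr{C}$ the canonical map $\mathcal{F}(X)\to\prod_i\mathcal{F}(X_i)$ induced by the coproduct injections is a bijection. For a presheaf $\mathcal{F}$ on $\mathscr{C}_1$ and an object $Y$ of $\mathscr{C}_2$, let $\mathscr{F}/Y$ be the category of pairs $(X,\psi)$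 with $X\in\mathscr{C}_1$ and $\psi:\mathscr{F}(X)\to Y$, a morphism $(X_1,\psi_1)\to(X_2,\psi_2)$ being $f:X_1\to X_2$ with $\psi_2\circ\mathscr{F}(f)=\psi_1$. Then $(\mathscr{F}_*\mathcal{F})(Y)$ is the set of families $(s_{X,\psi}\in\mathcal{F}(X))_{(X,\psi)\in\mathscr{F}/Y}$ with $f^*s_{X_2,\psi_2}=s_{X_1,\psi_1}$ for every morphism $f$ of $\mathscr{F}/Y$, and $g:Y_1\to Y_2$ acts by $(s_{X,\psi})\mapsto(s_{X,g\circ\phi})_{(X,\phi)\in\mathscr{F}/Y_1}$ (the right Kan extension). *)

From Stdlib Require Import FunctionalExtensionality ProofIrrelevance.
Set Implicit Arguments.
Unset Strict Implicit.

Record Category := {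
  Ob :> Type;
  Hom : Ob -> Ob -> Type;
  comp : forall a b c : Ob, Hom b c -> Hom a b -> Hom a c;
  idm : forall a : Ob, Hom a a;
  comp_assoc : forall a b c d (h : Hom c d) (g : Hom b c) (f : Hom a b),
      comp h (comp g f) = comp (comp h g) f;
  comp_id_l : forall a b (f : Hom a b), comp (idm b) f = f;
  comp_id_r : forall a b (f : Hom a b), comp f (idm a) = f
}.
Arguments comp {c a b c0} _ _ : rename.
Arguments idm {c} a : rename.
Arguments Hom {c} _ _ : rename.

Record Functor (C1 C2 : Category) := {
  Fob :> Ob C1 -> Ob C2;
  Fmap : forall a b : Ob C1, Hom a b -> Hom (Fob a) (Fob b);
  Fmap_id : forall a, Fmap (idm a) = idm (Fob a);
  Fmap_comp : forall a b c (g : Hom b c) (f : Hom a b),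
      Fmap (comp g f) = comp (Fmap g) (Fmap f)
}.
Arguments Fmap {C1 C2} f {a b} _ : rename.

Definition bijective {A B : Type} (f : A -> B) : Prop :=
  (forall x y, f x = f y -> x = y) /\ (forall y, exists x, f x = y).

Definition FullyFaithful {C1 C2 : Category} (F : Functor C1 C2) : Prop :=
  forall a b : Ob C1, bijective (fun f : Hom a b => Fmap F f).

Definition IsIso {C : Category} {a b : Ob C} (f : Hom a b) : Prop :=
  exists g : Hom b a, comp g f = idm a /\ comp f g = idm b.

Definition IsCoproduct {C : Category} (I : Type) (U : I -> Ob C) (S : Ob C)
  (inj : forall i, Hom (U i) S) : Prop :=
  forall (T : Ob C) (f : forall i, Hom (U i) T),
    exists h : Hom S T, (forall i, comp h (inj i) = f i) /\
      (forall h' : Hom S T, (forall i, comp h' (inj i) = f i) -> h' = h).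

Arguments IsCoproduct {C I} U S inj.

Definition IsBinCoproduct {C : Category} (X Y S : Ob C)
  (inl : Hom X S) (inr : Hom Y S) : Prop :=
  forall (T : Ob C) (f : Hom X T) (g : Hom Y T),
    exists h : Hom S T, (comp h inl = f /\ comp h inr = g) /\
      (forall h' : Hom S T, comp h' inl = f -> comp h' inr = g -> h' = h).

Definition IsInitial {C : Category} (e : Ob C) : Prop :=
  forall T : Ob C, exists h : Hom e T, forall h' : Hom e T, h' = h.

Definition IsPullback {C : Category} {X Y Z P : Ob C}
  (p1 : Hom P X) (p2 : Hom P Y) (f : Hom X Z) (g : Hom Y Z) : Prop :=
  comp f p1 = comp g p2 /\
  forall (Q : Ob C) (q1 : Hom Q X) (q2 : Hom Q Y), comp f q1 = comp g q2 ->
    exists h : Hom Q P, (comp p1 h = q1 /\ comp p2 h = q2) /\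
      (forall h' : Hom Q P, comp p1 h' = q1 -> comp p2 h' = q2 -> h' = h).

Definition InvertsCoproducts {C1 C2 : Category} (F : Functor C1 C2) : Prop :=
  FullyFaithful F /\
  forall (X : Ob C1) (I : Type) (Z : I -> Ob C2) (inj : forall i, Hom (Z i) (F X)),
    IsCoproduct Z (F X) inj ->
    exists Xs : I -> Ob C1, forall i, exists phi : Hom (F (Xs i)) (Z i), IsIso phi.

Definition Extensive (C : Category) : Prop :=
  (exists e : Ob C, IsInitial e) /\
  (* disjointness of existing binary coproducts *)
  (forall (e : Ob C), IsInitial e ->
   forall (X Y S : Ob C) (inl : Hom X S) (inr : Hom Y S),
     IsBinCoproduct inl inr ->
     forall (a : Hom e X) (b : Hom e Y), IsPullback a b inl inr) /\
  (* stability of existing coproducts under pullback *)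
  (forall (I : Type) (U : I -> Ob C) (S : Ob C) (inj : forall i, Hom (U i) S),
     IsCoproduct U S inj ->
     forall (X : Ob C) (f : Hom X S),
       (forall i, exists (P : Ob C) (p1 : Hom P X) (p2 : Hom P (U i)),
           IsPullback p1 p2 f (inj i)) /\
       (forall (P : I -> Ob C) (p1 : forall i, Hom (P i) X)
               (p2 : forall i, Hom (P i) (U i)),
           (forall i, IsPullback (p1 i) (p2 i) f (inj i)) ->
           IsCoproduct P X p1)).

Record Presheaf (C : Category) := {
  PF :> Ob C -> Type;
  Pmap : forall a b : Ob C, Hom a b -> PF b -> PF a;
  Pmap_id : forall a (s : PF a), Pmap (idm a) s = s;
  Pmap_comp : forall a b c (g : Hom b c) (f : Hom a b) (s : PF c),
      Pmap (comp g f) s = Pmap f (Pmap g s)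
}.
Arguments Pmap {C} p {a b} _ _ : rename.

Definition ExtensivePresheaf {C : Category} (P : Presheaf C) : Prop :=
  forall (I : Type) (U : I -> Ob C) (S : Ob C) (inj : forall i, Hom (U i) S),
    IsCoproduct U S inj ->
    bijective (fun (s : P S) (i : I) => Pmap P (inj i) s).

Definition KanOb {C1 C2 : Category} (F : Functor C1 C2) (P : Presheaf C1)
  (Y : Ob C2) : Type :=
  { s : forall (X : Ob C1) (psi : Hom (F X) Y), P X |
    forall (X1 X2 : Ob C1) (psi1 : Hom (F X1) Y) (psi2 : Hom (F X2) Y)
           (f : Hom X1 X2),
      comp psi2 (Fmap F f) = psi1 -> Pmap P f (s X2 psi2) = s X1 psi1 }.

Definition KanMap {C1 C2 : Category} (F : Functor C1 C2) (P : Presheaf C1)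
  (Y1 Y2 : Ob C2) (g : Hom Y1 Y2) (s : KanOb F P Y2) : KanOb F P Y1.
Proof.
  destruct s as [s hs].
  exists (fun X phi => s X (comp g phi)).
  intros X1 X2 psi1 psi2 f H. apply hs.
  rewrite <- comp_assoc, H. reflexivity.
Defined.

Arguments KanMap {C1 C2} F P {Y1 Y2} g s.

Lemma KanOb_eq {C1 C2 : Category} (F : Functor C1 C2) (P : Presheaf C1)
  (Y : Ob C2) (s t : KanOb F P Y) : proj1_sig s = proj1_sig t -> s = t.
Proof.
  destruct s as [s hs], t as [t ht]; simpl; intros ->.
  f_equal; apply proof_irrelevance.
Qed.

Definition KanExt {C1 C2 : Category} (F : Functor C1 C2) (P : Presheaf C1) :
  Presheaf C2.
Proof.
  refine {| PF := KanOb F P; Pmap := fun a b g s => KanMap F P g s |}.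
  - intros a [s hs]; apply KanOb_eq; simpl.
    apply functional_extensionality_dep; intro X.
    apply functional_extensionality; intro phi.
    rewrite comp_id_l; reflexivity.
  - intros a b c g f [s hs]; apply KanOb_eq; simpl.
    apply functional_extensionality_dep; intro X.
    apply functional_extensionality; intro phi.
    rewrite comp_assoc; reflexivity.
Defined.

From Stdlib Require Import FunctionalExtensionality ProofIrrelevance ClassicalEpsilon ChoiceFacts.

(* Let [S] be the coproduct of the [U i] in the extensive category [C2] and
   let [psi : F X -> S].  Pulling the coproduct back along [psi] splits [F X]
   into pieces which, [F] inverting coproducts, are images [F (X i)], and by
   full faithfulness [X] is the coproduct of the [X i].  A section of [F_* P]
   over [S] is thus determined by its values on such pieces, whence
   injectivity.  Conversely a family of sections [t i] over the [U i] glues: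
   the value at [(X, psi)] is the unique element of [P X] restricting to the
   values of the [t i] on the pieces, [P] being extensive.  Gluing is
   consistent because two factorisations [inj k \o al = inj j \o be] through
   the coproduct either have [k = j] and [al = be] (injections are monic), or
   have [k <> j] and an initial domain, over which [P] is a singleton. *)

Lemma dependent_choice {A : Type} {B : A -> Type} (R : forall a, B a -> Prop) :
  (forall a, exists b, R a b) -> exists f : forall a, B a, forall a, R a (f a).
Proof. apply (non_dep_dep_functional_choice choice). Qed.

Definition fupdate {A : Type} {B : A -> Type} (f : forall a, B a) (j : A) (y : B j) :
  forall a, B a :=
  fun a => match excluded_middle_informative (j = a) with
           | left e => eq_rect j B y a e
           | right _ => f a
           end.

Lemma fupdate_same {A : Type} {B : A -> Type} (f : forall a, B a) (j : A) (y : B j) :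
  fupdate f j y j = y.
Proof.
  unfold fupdate; destruct (excluded_middle_informative (j = j)) as [e | n].
  - now rewrite (proof_irrelevance _ e eq_refl).
  - now contradiction n.
Qed.

Lemma fupdate_other {A : Type} {B : A -> Type} (f : forall a, B a) (j : A) (y : B j) a :
  j <> a -> fupdate f j y a = f a.
Proof.
  intros n; unfold fupdate; now destruct (excluded_middle_informative (j = a)).
Qed.

Lemma split_epi_cancel {C : Category} {A B T : Ob C} (p : Hom A B) (s : Hom B A)
  (g h : Hom B T) : comp p s = idm B -> comp g p = comp h p -> g = h.
Proof.
  intros Hps Hgh.
  rewrite <- (comp_id_r g), <- (comp_id_r h), <- Hps, !comp_assoc, Hgh.
  reflexivity.
Qed.

Section Coproducts.
Context {C : Category} {I : Type} {U : I -> Ob C} {S : Ob C}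
  {inj : forall i, Hom (U i) S}.
Hypothesis HS : IsCoproduct U S inj.

Lemma coproduct_copair_update {T : Ob C} (f : forall i, Hom (U i) T) {j : I}
  (g : Hom (U j) T) :
  exists h : Hom S T, comp h (inj j) = g /\ forall i, j <> i -> comp h (inj i) = f i.
Proof.
  destruct (HS T (fupdate f j g)) as [h [Hh _]].
  exists h; split.
  - now rewrite Hh, fupdate_same.
  - intros i Hji; now rewrite Hh, fupdate_other.
Qed.

Lemma coproduct_hom_unique_of_two_sections {k j : I} (sk : Hom S (U k))
  (sj : Hom S (U j)) :
  k <> j -> comp (inj k) sk = idm S -> comp (inj j) sj = idm S ->
  forall (T : Ob C) (g1 g2 : Hom S T), g1 = g2.
Proof.
  intros Hkj Hk Hj T g1 g2.
  destruct (coproduct_copair_update (fun i => comp g1 (inj i)) (comp g2 (inj j)))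
    as [h [Hhj Hhk]].
  specialize (Hhk k (not_eq_sym Hkj)).
  transitivity h; [symmetry|].
  - exact (split_epi_cancel _ _ _ _ Hk Hhk).
  - exact (split_epi_cancel _ _ _ _ Hj Hhj).
Qed.

Lemma coproduct_reindex_iso {V : I -> Ob C} (e : forall i, Hom (V i) (U i)) :
  (forall i, IsIso (e i)) -> IsCoproduct V S (fun i => comp (inj i) (e i)).
Proof.
  intros He T f.
  destruct (dependent_choice
              (fun i (g : Hom (U i) (V i)) => comp g (e i) = idm _ /\ comp (e i) g = idm _)
              He) as [g Hg].
  destruct (HS T (fun i => comp (f i) (g i))) as [h [Hh Hu]].
  exists h; split.
  - intros i. rewrite comp_assoc, Hh, <- comp_assoc, (proj1 (Hg i)).
    apply comp_id_r.
  - intros h' Hh'; apply Hu; intros i.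
    now rewrite <- Hh', <- !comp_assoc, (proj2 (Hg i)), comp_id_r.
Qed.

End Coproducts.

Section FullyFaithful.
Context {C1 C2 : Category} {F : Functor C1 C2}.
Hypothesis FF : FullyFaithful F.

Lemma fully_faithful_reflects_coproduct (I : Type) (Xs : I -> Ob C1) (X : Ob C1)
  (a : forall i, Hom (Xs i) X) :
  IsCoproduct (fun i => F (Xs i)) (F X) (fun i => Fmap F (a i)) -> IsCoproduct Xs X a.
Proof.
  intros Hc T f.
  destruct (Hc (F T) (fun i => Fmap F (f i))) as [h [Hh Hu]].
  destruct (proj2 (FF X T) h) as [h0 <-].
  exists h0; split.
  - intros i; apply (proj1 (FF _ _)); cbn.
    rewrite Fmap_comp; apply Hh.
  - intros h' Hh'; apply (proj1 (FF _ _)); cbn.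
    apply Hu; intros i.
    now rewrite <- Fmap_comp, Hh'.
Qed.

Lemma fully_faithful_reflects_initial (W : Ob C1) : IsInitial (F W) -> IsInitial W.
Proof.
  intros Hi T.
  destruct (Hi (F T)) as [h Hh].
  destruct (proj2 (FF W T) h) as [h0 <-].
  exists h0; intros h'.
  apply (proj1 (FF _ _)), Hh.
Qed.

End FullyFaithful.

Section Extensive.
Context {C : Category}.
Hypothesis HC : Extensive C.

Lemma extensive_pullback_coproduct {I : Type} {U : I -> Ob C} {S : Ob C}
  {inj : forall i, Hom (U i) S} (HS : IsCoproduct U S inj) {X : Ob C} (f : Hom X S) :
  exists (P : I -> Ob C) (p1 : forall i, Hom (P i) X) (p2 : forall i, Hom (P i) (U i)),
    (forall i, IsPullback (p1 i) (p2 i) f (inj i)) /\ IsCoproduct P X p1.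
Proof.
  destruct (proj2 (proj2 HC) I U S inj HS X f) as [Hex Hcop].
  destruct (dependent_choice
              (fun i (b : {P : Ob C & (Hom P X * Hom P (U i))%type}) =>
                 IsPullback (fst (projT2 b)) (snd (projT2 b)) f (inj i)))
    as [pb Hpb].
  { intros i; destruct (Hex i) as (P & p1 & p2 & Hp).
    now exists (existT _ P (p1, p2)). }
  exists (fun i => projT1 (pb i)), (fun i => fst (projT2 (pb i))),
    (fun i => snd (projT2 (pb i))).
  split; [exact Hpb | exact (Hcop _ _ _ Hpb)].
Qed.

Lemma extensive_initial_of_hom_unique (A : Ob C) :
  (forall (T : Ob C) (g1 g2 : Hom A T), g1 = g2) -> IsInitial A.
Proof.
  intros Hu.
  destruct HC as [[e He] [Hdisj _]].
  assert (Hcodiag : IsBinCoproduct (idm A) (idm A)).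
  { intros T f g; exists f; split.
    - split; rewrite comp_id_r; [reflexivity | apply Hu].
    - intros h' Hf _; now rewrite comp_id_r in Hf. }
  destruct (He A) as [a _].
  destruct (proj2 (Hdisj e He A A A _ _ Hcodiag a a) A (idm A) (idm A) eq_refl)
    as [toe _].
  intros T; destruct (He T) as [t _].
  exists (comp t toe); intros; apply Hu.
Qed.

Section Injections.
Context {I : Type} {U : I -> Ob C} {S : Ob C} {inj : forall i, Hom (U i) S}.
Hypothesis HS : IsCoproduct U S inj.

Lemma extensive_coproduct_inj_monic {j : I} {A : Ob C} {al be : Hom A (U j)} :
  comp (inj j) al = comp (inj j) be -> al = be.
Proof.
  intros Hab.
  destruct (extensive_pullback_coproduct HS (inj j)) as (Q & q & r & Hpb & HQ).
  destruct (proj2 (Hpb j) (U j) (idm _) (idm _) eq_refl) as [d [[Hqd Hrd] _]].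
  destruct (coproduct_copair_update HQ q (r j)) as [h [Hh _]].
  (* [h] carries the first leg of the kernel pair of [inj j] to the second;
     composed with the diagonal this says [h] is the identity. *)
  assert (Hid : h = idm _).
  { transitivity (comp h (comp (q j) d)); [now rewrite Hqd, comp_id_r |].
    now rewrite comp_assoc, Hh. }
  destruct (proj2 (Hpb j) A al be Hab) as [d' [[Hqd' Hrd'] _]].
  now rewrite <- Hqd', <- Hrd', <- Hh, Hid, comp_id_l.
Qed.

Lemma extensive_coproduct_inj_disjoint {k j : I} {A : Ob C} {al : Hom A (U k)}
  {be : Hom A (U j)} :
  k <> j -> comp (inj k) al = comp (inj j) be -> IsInitial A.
Proof.
  intros Hkj Hab.
  destruct (extensive_pullback_coproduct HS (comp (inj k) al)) as (Q & q & r & Hpb & HQ).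
  destruct (proj2 (Hpb k) A (idm A) al) as [sk [[Hsk _] _]].
  { apply comp_id_r. }
  destruct (proj2 (Hpb j) A (idm A) be) as [sj [[Hsj _] _]].
  { now rewrite comp_id_r. }
  apply extensive_initial_of_hom_unique.
  exact (coproduct_hom_unique_of_two_sections HQ sk sj Hkj Hsk Hsj).
Qed.

End Injections.
End Extensive.

Lemma extensive_presheaf_initial_unique {C : Category} {P : Presheaf C} :
  ExtensivePresheaf P -> forall W : Ob C, IsInitial W -> forall x y : P W, x = y.
Proof.
  intros HP W Hi x y.
  pose (empty_family := Empty_set_rect (fun _ => Ob C)).
  assert (Hempty : IsCoproduct empty_family W (fun i => match i with end)).
  { intros T f; destruct (Hi T) as [h Hh].
    exists h; split; [intros [] | intros h' _; apply Hh]. }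
  apply (proj1 (HP _ _ _ _ Hempty)).
  apply functional_extensionality_dep; intros [].
Qed.

Section KanExtension.
Context {C1 C2 : Category} {F : Functor C1 C2} {P : Presheaf C1}.
Hypotheses (HF : InvertsCoproducts F) (HC2 : Extensive C2) (HP : ExtensivePresheaf P).
Context {I : Type} {U : I -> Ob C2} {S : Ob C2} {inj : forall i, Hom (U i) S}.
Hypothesis HS : IsCoproduct U S inj.

Record decomposition (X : Ob C1) (psi : Hom (F X) S) := {
  piece : I -> Ob C1;
  piece_inj : forall i, Hom (piece i) X;
  piece_map : forall i, Hom (F (piece i)) (U i);
  piece_coproduct : IsCoproduct piece X piece_inj;
  piece_square : forall i, comp psi (Fmap F (piece_inj i)) = comp (inj i) (piece_map i);
  piece_factor : forall (Z : Ob C1) (g : Hom Z X) i (phi : Hom (F Z) (U i)),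
    comp psi (Fmap F g) = comp (inj i) phi ->
    exists c : Hom Z (piece i),
      comp (piece_inj i) c = g /\ comp (piece_map i) (Fmap F c) = phi
}.
Arguments piece_inj {X psi}.
Arguments piece_map {X psi}.
Arguments piece_coproduct {X psi}.
Arguments piece_square {X psi}.
Arguments piece_factor {X psi}.

Lemma decomposition_exists (X : Ob C1) (psi : Hom (F X) S) :
  inhabited (decomposition X psi).
Proof.
  destruct HF as [FF Finv].
  destruct (extensive_pullback_coproduct HC2 HS psi) as (Q & q & r & Hpb & HQ).
  destruct (Finv X I Q q HQ) as [Xs HXs].
  destruct (dependent_choice (fun i (e : Hom (F (Xs i)) (Q i)) => IsIso e) HXs)
    as [e He].
  destruct (dependent_choice (fun i (a : Hom (Xs i) X) => Fmap F a = comp (q i) (e i)))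
    as [a Ha].
  { intros i; exact (proj2 (FF (Xs i) X) (comp (q i) (e i))). }
  constructor.
  refine {| piece := Xs; piece_inj := a; piece_map := fun i => comp (r i) (e i) |}.
  - apply (fully_faithful_reflects_coproduct FF).
    replace (fun i => Fmap F (a i)) with (fun i => comp (q i) (e i))
      by (apply functional_extensionality_dep; intros i; now rewrite Ha).
    exact (coproduct_reindex_iso HQ e He).
  - intros i; now rewrite Ha, comp_assoc, (proj1 (Hpb i)), comp_assoc.
  - intros Z g i phi Hg.
    destruct (proj2 (Hpb i) (F Z) (Fmap F g) phi Hg) as [m [[Hqm Hrm] _]].
    destruct (He i) as [e' [_ Hee']].
    assert (Hm : comp (e i) (comp e' m) = m) by now rewrite comp_assoc, Hee', comp_id_l.
    destruct (proj2 (FF Z (Xs i)) (comp e' m)) as [c Hc]; cbn in Hc.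
    exists c; split.
    + apply (proj1 (FF Z X)); cbn.
      now rewrite Fmap_comp, Hc, Ha, <- comp_assoc, Hm.
    + now rewrite Hc, <- comp_assoc, Hm.
Qed.

Lemma kan_sections_agree (t : forall i, KanOb F P (U i)) (W : Ob C1) (k j : I)
  (al : Hom (F W) (U k)) (be : Hom (F W) (U j)) :
  comp (inj k) al = comp (inj j) be -> proj1_sig (t k) W al = proj1_sig (t j) W be.
Proof.
  intros Hab.
  destruct (excluded_middle_informative (k = j)) as [<- | Hkj].
  - now rewrite (extensive_coproduct_inj_monic HC2 HS Hab).
  - apply (extensive_presheaf_initial_unique HP), (fully_faithful_reflects_initial (proj1 HF)).
    exact (extensive_coproduct_inj_disjoint HC2 HS Hkj Hab).
Qed.

Definition kan_restrict (s : KanOb F P S) : forall i, KanOb F P (U i) :=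
  fun i => KanMap F P (inj i) s.

Lemma kan_restrict_injective (s1 s2 : KanOb F P S) :
  kan_restrict s1 = kan_restrict s2 -> s1 = s2.
Proof.
  intros H; apply KanOb_eq.
  apply functional_extensionality_dep; intros X.
  apply functional_extensionality; intros psi.
  destruct (decomposition_exists X psi) as [d].
  apply (proj1 (HP _ _ _ _ (piece_coproduct d))).
  apply functional_extensionality_dep; intros i.
  destruct s1 as [s1 Hs1], s2 as [s2 Hs2].
  rewrite (Hs1 _ _ _ psi _ eq_refl), (Hs2 _ _ _ psi _ eq_refl), piece_square.
  exact (f_equal (fun u : forall i, KanOb F P (U i) => proj1_sig (u i) _ (piece_map d i)) H).
Qed.

Definition glues (t : forall i, KanOb F P (U i)) (X : Ob C1) (psi : Hom (F X) S)
  (x : P X) : Prop :=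
  forall (Z : Ob C1) (g : Hom Z X) i (phi : Hom (F Z) (U i)),
    comp psi (Fmap F g) = comp (inj i) phi -> Pmap P g x = proj1_sig (t i) Z phi.

Lemma glues_unique {t X psi} {x y : P X} : glues t X psi x -> glues t X psi y -> x = y.
Proof.
  intros Hx Hy.
  destruct (decomposition_exists X psi) as [d].
  apply (proj1 (HP _ _ _ _ (piece_coproduct d))).
  apply functional_extensionality_dep; intros i.
  now rewrite (Hx _ _ i _ (piece_square d i)), (Hy _ _ i _ (piece_square d i)).
Qed.

Lemma glues_exists t X psi : exists x : P X, glues t X psi x.
Proof.
  destruct (decomposition_exists X psi) as [d].
  destruct (proj2 (HP _ _ _ _ (piece_coproduct d))
              (fun i => proj1_sig (t i) _ (piece_map d i))) as [x Hx].
  exists x; intros Z g j phi Hg.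
  destruct (decomposition_exists Z (comp psi (Fmap F g))) as [dz].
  apply (proj1 (HP _ _ _ _ (piece_coproduct dz))).
  apply functional_extensionality_dep; intros k.
  assert (Hsq : comp psi (Fmap F (comp g (piece_inj dz k)))
                = comp (inj k) (piece_map dz k))
    by now rewrite Fmap_comp, comp_assoc, piece_square.
  destruct (piece_factor d _ _ _ _ Hsq) as [c [Hc Hcmap]].
  pose proof (equal_f_dep Hx k) as Hxk; cbn in Hxk.
  rewrite <- Pmap_comp, <- Hc, Pmap_comp, Hxk.
  rewrite (proj2_sig (t k) _ _ _ _ c Hcmap).
  rewrite (proj2_sig (t j) _ _ _ phi _ eq_refl).
  apply kan_sections_agree.
  now rewrite <- piece_square, comp_assoc, <- Hg.
Qed.

Lemma glues_restrict {t X1 X2} {psi : Hom (F X2) S} (f : Hom X1 X2) {x : P X2} :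
  glues t X2 psi x -> glues t X1 (comp psi (Fmap F f)) (Pmap P f x).
Proof.
  intros Hx Z g i phi Hg.
  rewrite <- Pmap_comp; apply Hx.
  now rewrite Fmap_comp, comp_assoc.
Qed.

Lemma kan_restrict_surjective (t : forall i, KanOb F P (U i)) :
  exists s : KanOb F P S, kan_restrict s = t.
Proof.
  destruct (dependent_choice (fun X (sX : forall psi : Hom (F X) S, P X) =>
                                forall psi, glues t X psi (sX psi)))
    as [s Hs].
  { intros X; apply (dependent_choice (fun psi => glues t X psi)), glues_exists. }
  assert (Hnat : forall X1 X2 psi1 psi2 (f : Hom X1 X2),
             comp psi2 (Fmap F f) = psi1 -> Pmap P f (s X2 psi2) = s X1 psi1).
  { intros X1 X2 psi1 psi2 f <-.
    exact (glues_unique (glues_restrict f (Hs X2 psi2)) (Hs _ _)). }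
  exists (exist _ s Hnat).
  apply functional_extensionality_dep; intros i; apply KanOb_eq; cbn.
  apply functional_extensionality_dep; intros X.
  apply functional_extensionality; intros phi.
  rewrite <- (Pmap_id (s X _)).
  apply Hs.
  now rewrite Fmap_id, comp_id_r.
Qed.

End KanExtension.

Theorem mainTheorem3 (C1 C2 : Category) (F : Functor C1 C2) (P : Presheaf C1) :
  InvertsCoproducts F -> Extensive C2 -> ExtensivePresheaf P ->
  ExtensivePresheaf (KanExt F P).
Proof.
  intros HF HC2 HP I U S inj HS; split.
  - exact (kan_restrict_injective HF HC2 HP HS).
  - exact (kan_restrict_surjective HF HC2 HP HS).
Qed.
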